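(* Let $A$ be an MV-algebra and $d$ a $(\odot,\vee)$-derivation on $A$. The following are equivalent: (1) $d=\mathrm{Id}_A$; (2) $d(1)=1$; (3) $d(a)=1$ for some $a\in A$; (4) $d$ is surjective; (5) $d(x\oplus y)=(d(x)\oplus y)\wedge(x\oplus d(y))$ for all $x,y\in A$.
   Context: An MV-algebra is an algebra $(A,\oplus,{}^*,0)$ of type $(2,1,0)$ satisfying: $x\oplus(y\oplus z)=(x\oplus y)\oplus z$, $x\oplus y=y\oplus x$, $x\oplus 0=x$, $x^{**}=x$, $x\oplus 0^*=0^*$, $(x^*\oplus y)^*\oplus y=(y^*\oplus x)^*\oplus x$. Put $1=0^*$ and $x\odot y=(x^*\oplus y^* )^*$. The natural order is $x\le y$ iff $x^*\oplus y=1$, with lattice operations $x\vee y=(x\odot y^* )\oplus y$, $x\wedge y=x\odot(x^*\oplus y)$. A $(\odot,\vee)$-derivation on $A$ is a map $d:A\to A$ with $d(x\odot y)=(d(x)\odot y)\vee(x\odot d(y))$ for all $x,y\in A$. *)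

Record MVAlgebra := {
  carrier :> Type;
  mv_plus : carrier -> carrier -> carrier;
  mv_neg  : carrier -> carrier;
  mv_zero : carrier;
  mv_assoc : forall x y z, mv_plus x (mv_plus y z) = mv_plus (mv_plus x y) z;
  mv_comm  : forall x y, mv_plus x y = mv_plus y x;
  mv_plus0 : forall x, mv_plus x mv_zero = x;
  mv_negK  : forall x, mv_neg (mv_neg x) = x;
  mv_plus1 : forall x, mv_plus x (mv_neg mv_zero) = mv_neg mv_zero;
  mv_luk   : forall x y,
      mv_plus (mv_neg (mv_plus (mv_neg x) y)) y
      = mv_plus (mv_neg (mv_plus (mv_neg y) x)) x
}.

Arguments mv_plus {_}.
Arguments mv_neg {_}.
Arguments mv_zero {_}.

Section Ops.
Variable A : MVAlgebra.
Definition mv_one : A := mv_neg mv_zero.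
Definition mv_odot (x y : A) : A := mv_neg (mv_plus (mv_neg x) (mv_neg y)).
Definition mv_le (x y : A) : Prop := mv_plus (mv_neg x) y = mv_one.
Definition mv_join (x y : A) : A := mv_plus (mv_odot x (mv_neg y)) y.
Definition mv_meet (x y : A) : A := mv_odot x (mv_plus (mv_neg x) y).

Definition odot_join_derivation (d : A -> A) : Prop :=
  forall x y, d (mv_odot x y) = mv_join (mv_odot (d x) y) (mv_odot x (d y)).
End Ops.

Arguments mv_one {_}.
Arguments mv_odot {_}.
Arguments mv_le {_}.
Arguments mv_join {_}.
Arguments mv_meet {_}.
Arguments odot_join_derivation {_}.


(* Two facts drive all five
   equivalences:
   - d is decreasing: d 0 = 0 (take x = y = 0 in the derivation law), and then
     0 = d (x ⊙ x* ) = (d x ⊙ x* ) ∨ (x ⊙ d x* ) forces d x ⊙ x* = 0,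
     i.e. d x ≤ x;
   - d 1 = 1 already forces d = Id, since d x = d (x ⊙ 1) = d x ∨ (x ⊙ d 1)
     = d x ∨ x = x.
   Hence if d a = 1 then 1 ≤ a, so a = 1 and d 1 = 1; surjectivity gives such
   an a; and the ⊕-rule (5) at x = y = 1 yields d 1 = 1 ⊓ 1 = 1.  Conversely
   Id is surjective and satisfies (5) because meets are idempotent. *)

Section MVFacts.
Variable A : MVAlgebra.

Lemma odot_one (x : A) : mv_odot x mv_one = x.
Proof. unfold mv_odot, mv_one. rewrite mv_negK, mv_plus0, mv_negK. reflexivity. Qed.

Lemma odot_zero (x : A) : mv_odot x mv_zero = mv_zero.
Proof. unfold mv_odot. rewrite mv_plus1. apply mv_negK. Qed.

Lemma odot_comm (x y : A) : mv_odot x y = mv_odot y x.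
Proof. unfold mv_odot. rewrite mv_comm. reflexivity. Qed.

Lemma plus_one (x : A) : mv_plus x mv_one = mv_one.
Proof. apply mv_plus1. Qed.

(* x* ⊕ x = 1: the Łukasiewicz axiom with y = 1. *)
Lemma neg_plus_self (x : A) : mv_plus (mv_neg x) x = mv_one.
Proof.
  pose proof (mv_luk A x mv_one) as H.
  rewrite plus_one in H. unfold mv_one in H.
  rewrite mv_negK, (mv_comm A mv_zero), mv_plus0 in H.
  symmetry. exact H.
Qed.

Lemma odot_neg_self (x : A) : mv_odot x (mv_neg x) = mv_zero.
Proof. unfold mv_odot. rewrite mv_negK, neg_plus_self. apply mv_negK. Qed.

Lemma plus_eq_zero_l (x y : A) : mv_plus x y = mv_zero -> x = mv_zero.
Proof.
  intro H.
  assert (E : mv_plus (mv_neg x) (mv_plus x y) = mv_one).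
  { rewrite mv_assoc, neg_plus_self, mv_comm. apply plus_one. }
  rewrite H, mv_plus0 in E.
  rewrite <- (mv_negK A x), E. apply mv_negK.
Qed.

Lemma join_eq_zero_l (a b : A) : mv_join a b = mv_zero -> a = mv_zero.
Proof.
  unfold mv_join. intro H.
  assert (Hb : b = mv_zero) by (rewrite mv_comm in H; exact (plus_eq_zero_l _ _ H)).
  subst b. apply plus_eq_zero_l in H. rewrite odot_one in H. exact H.
Qed.

Lemma le_join (a b : A) : mv_le a b -> mv_join a b = b.
Proof.
  unfold mv_le, mv_join, mv_odot. intro H.
  rewrite mv_negK, H. unfold mv_one. rewrite mv_negK, mv_comm. apply mv_plus0.
Qed.

Lemma one_le_eq (a : A) : mv_le mv_one a -> a = mv_one.
Proof.
  unfold mv_le. unfold mv_one at 1. rewrite mv_negK, mv_comm, mv_plus0. trivial.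
Qed.

Lemma meet_idem (x : A) : mv_meet x x = x.
Proof. unfold mv_meet. rewrite neg_plus_self. apply odot_one. Qed.

End MVFacts.

Section Derivation.
Variable A : MVAlgebra.
Variable d : A -> A.
Hypothesis hd : odot_join_derivation d.

Lemma derivation_zero : d mv_zero = mv_zero.
Proof.
  pose proof (hd mv_zero mv_zero) as H.
  rewrite (odot_comm _ mv_zero (d mv_zero)), !odot_zero in H.
  rewrite H. unfold mv_join. rewrite mv_plus0. apply odot_one.
Qed.

Lemma derivation_le (x : A) : mv_le (d x) x.
Proof.
  pose proof (hd x (mv_neg x)) as H.
  rewrite odot_neg_self, derivation_zero in H.
  symmetry in H. apply join_eq_zero_l in H.
  unfold mv_odot in H. rewrite mv_negK in H.
  unfold mv_le, mv_one. rewrite <- H, mv_negK. reflexivity.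
Qed.

(* If d 1 = 1 then d is the identity: d x = d x ∨ x = x. *)
Lemma derivation_one_id : d mv_one = mv_one -> forall x, d x = x.
Proof.
  intros H1 x. pose proof (hd x mv_one) as H.
  rewrite !odot_one, H1, odot_one in H.
  rewrite H. apply le_join, derivation_le.
Qed.

Lemma derivation_eq_one (a : A) : d a = mv_one -> a = mv_one.
Proof. intro Ha. apply one_le_eq. rewrite <- Ha. apply derivation_le. Qed.

End Derivation.

Theorem proposition3p4 (A : MVAlgebra) (d : A -> A)
  (hd : odot_join_derivation d) :
  ((forall x, d x = x) <-> d mv_one = mv_one) /\
  (d mv_one = mv_one <-> exists a : A, d a = mv_one) /\
  ((exists a : A, d a = mv_one) <-> (forall y : A, exists x : A, d x = y)) /\
  ((forall y : A, exists x : A, d x = y) <->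
     (forall x y : A, d (mv_plus x y) = mv_meet (mv_plus (d x) y) (mv_plus x (d y)))).
Proof.
  pose proof (derivation_one_id A d hd) as one_id.
  assert (hit_one : (exists a : A, d a = mv_one) -> d mv_one = mv_one).
  { intros [a Ha]. pose proof (derivation_eq_one A d hd a Ha) as Ea.
    subst a. exact Ha. }
  assert (surj_one : (forall y : A, exists x : A, d x = y) -> d mv_one = mv_one).
  { intro Hs. apply hit_one, Hs. }
  split; [split | split; [split | split; [split | split]]].
  - intro Hid. apply Hid.
  - exact one_id.
  - intro H1. exists mv_one. exact H1.
  - exact hit_one.
  - intros Ha y. exists y. exact (one_id (hit_one Ha) y).
  - intro Hs. apply Hs.
  - intros Hs x y. rewrite !(one_id (surj_one Hs)). symmetry. apply meet_idem.
  - intros Hplus y. exists y. apply one_id.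
    pose proof (Hplus mv_one mv_one) as E.
    rewrite !plus_one, mv_comm, plus_one, meet_idem in E. exact E.
Qed.
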